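(* Let $\mathscr K$ be a quasivariety of structures and let $n\ge1$ be an integer. Let $\mathbf F=\mathbf F_{\mathscr K}(n)$ be the $n$-generated $\mathscr K$-free structure, let $\mathbf T_n$ be the join semilattice (with $0$) of compact elements of $\operatorname{Con}_{\mathscr K}\mathbf F$, and let $\widehat{\mathscr E}=\{\widehat\varepsilon:\varepsilon\in\operatorname{End}\mathbf F\}$. Then the lattice of all quasi-equational theories that (1) contain the theory of $\mathscr K$ and (2) are determined relative to $\mathscr K$ by quasi-identities in at most $n$ variables, ordered by inclusion, is isomorphic to $\operatorname{Con}\mathbf S_n$, where $\mathbf S_n=\langle\mathbf T_n,\vee,0,\widehat{\mathscr E}\rangle$.
   Context: Structures have a signature of function and relation symbols; homomorphisms preserve operations and map relations into relations. A congruence on a structure $\mathbf A$ is a pair $\theta=\langle\theta_0,\theta_1\rangle$ with $\theta_0$ an equivalence relation compatible with the operations and, for each relation symbol $R$ of arity $m$, a set $\theta_1^R$ with $R^{\mathbf A}\subseteq\theta_1^R\subseteq A^m$ closed under componentwise $\theta_0$-equivalence. A quasivariety is a class of structures closed under substructures, direct products and ultraproducts, equivalently axiomatized by quasi-identities $\&_i\alpha_i\Rightarrow\beta$ with atomic formulae of the form $s\approx t$ or $R(\mathbf s)$ (equality being true equality); a quasi-equational theory is the set of quasi-identities valid in a quasivariety. A congruence $\psi$ of $\mathbf F$ is a $\mathscr K$-congruence if $\mathbf F/\psi\in\mathscr K$; these form an algebraic lattice $\operatorname{Con}_{\mathscr K}\mathbf F$, whose compact elements are the finite joins of the principal $\mathscr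 K$-congruences $\operatorname{con}_{\mathscr K}\alpha$ generated by single atomic formulae $\alpha$ over $\mathbf F$. For $\varepsilon\in\operatorname{End}\mathbf F$, $\widehat\varepsilon$ is defined by $\widehat\varepsilon(\operatorname{con}_{\mathscr K}(s,t))=\operatorname{con}_{\mathscr K}(\varepsilon s,\varepsilon t)$, $\widehat\varepsilon(\operatorname{con}_{\mathscr K}R(\mathbf s))=\operatorname{con}_{\mathscr K}R(\varepsilon\mathbf s)$, $\widehat\varepsilon(\bigvee_j\varphi_j)=\bigvee_j\widehat\varepsilon\varphi_j$; it is well defined and preserves joins and $0$. $\operatorname{Con}\mathbf S_n$ is the lattice of equivalence relations on $T_n$ compatible with $\vee$ and all $\widehat\varepsilon$. *)

From Stdlib Require Import List ClassicalEpsilon.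
Set Implicit Arguments.
Unset Strict Implicit.

Definition fin (n : nat) := {i : nat | i < n}.

Record signature := Signature {
  fsym : Type; farity : fsym -> nat;
  rsym : Type; rarity : rsym -> nat }.

Record structure (S : signature) := Structure {
  carrier :> Type;
  fun_of : forall f : fsym S, (fin (farity f) -> carrier) -> carrier;
  rel_of : forall r : rsym S, (fin (rarity r) -> carrier) -> Prop }.
Arguments fun_of {S} s f _ : rename.
Arguments rel_of {S} s r _ : rename.

Record hom (S : signature) (A B : structure S) := Hom {
  hmap :> A -> B;
  hom_fun : forall f args, hmap (fun_of A f args) = fun_of B f (fun i => hmap (args i));
  hom_rel : forall r args, rel_of A r args -> rel_of B r (fun i => hmap (args i)) }.

Inductive term (S : signature) (V : Type) : Type :=
| Var : V -> term S V
| App : forall f : fsym S, (fin (farity f) -> term S V) -> term S V.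
Arguments Var {S V} _.
Arguments App {S V} f _.

Fixpoint eval (S : signature) (A : structure S) (V : Type) (v : V -> A)
  (t : term S V) : A :=
  match t with
  | Var x => v x
  | App f args => fun_of A f (fun i => eval v (args i))
  end.
Arguments eval {S} A {V} v t.

Inductive atom (S : signature) (V : Type) : Type :=
| AEq : term S V -> term S V -> atom S V
| ARel : forall r : rsym S, (fin (rarity r) -> term S V) -> atom S V.
Arguments AEq {S V} _ _.
Arguments ARel {S V} r _.

Definition holds (S : signature) (A : structure S) (V : Type) (v : V -> A)
  (a : atom S V) : Prop :=
  match a with
  | AEq s t => eval A v s = eval A v t
  | ARel r ts => rel_of A r (fun i => eval A v (ts i))
  end.
Arguments holds {S} A {V} v a.

Record qi (S : signature) := QI { prems : list (atom S nat); concl : atom S nat }.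

Definition sat (S : signature) (A : structure S) (q : qi S) : Prop :=
  forall v : nat -> A,
    (forall a, In a (prems q) -> holds A v a) -> holds A v (concl q).

Definition Mod (S : signature) (Ax : qi S -> Prop) (A : structure S) : Prop :=
  forall q, Ax q -> sat A q.

Definition conseq (S : signature) (Ax : qi S -> Prop) (q : qi S) : Prop :=
  forall A : structure S, Mod Ax A -> sat A q.

Definition qe_theory (S : signature) (T : qi S -> Prop) : Prop :=
  exists Ax : qi S -> Prop, forall q, T q <-> conseq Ax q.

Fixpoint occurs_term (S : signature) (x : nat) (t : term S nat) : Prop :=
  match t with
  | Var y => x = y
  | App f args => exists i, occurs_term x (args i)
  end.

Definition occurs_atom (S : signature) (x : nat) (a : atom S nat) : Prop :=
  match a with
  | AEq s t => occurs_term x s \/ occurs_term x t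
  | ARel r ts => exists i, occurs_term x (ts i)
  end.

Definition occurs_qi (S : signature) (x : nat) (q : qi S) : Prop :=
  (exists a, In a (prems q) /\ occurs_atom x a) \/ occurs_atom x (concl q).

Definition nvars_le (S : signature) (n : nat) (q : qi S) : Prop :=
  exists l : list nat, length l <= n /\ forall x, occurs_qi x q -> In x l.

(* The theories of the lattice in the theorem: quasi-equational theories T
   (1) containing the theory of K = Mod Ax and
   (2) determined relative to K by their quasi-identities in <= n variables. *)
Definition rel_theory (S : signature) (Ax : qi S -> Prop) (n : nat)
  (T : qi S -> Prop) : Prop :=
  qe_theory T /\
  (forall q, conseq Ax q -> T q) /\
  (forall q, T q <-> conseq (fun q' => Ax q' \/ (T q' /\ nvars_le n q')) q).

Definition is_free (S : signature) (Ax : qi S -> Prop) (n : nat)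
  (F : structure S) (gen : fin n -> F) : Prop :=
  Mod Ax F /\
  (forall x : F, exists t : term S (fin n), eval F gen t = x) /\
  (forall (A : structure S), Mod Ax A -> forall a : fin n -> A,
      exists h : hom F A, forall i, h (gen i) = a i).

Definition cpair (S : signature) (A : structure S) : Type :=
  ((A -> A -> Prop) * (forall r : rsym S, (fin (rarity r) -> A) -> Prop))%type.

Definition is_congruence (S : signature) (A : structure S) (th : cpair A) : Prop :=
  (forall a, fst th a a) /\
  (forall a b, fst th a b -> fst th b a) /\
  (forall a b c, fst th a b -> fst th b c -> fst th a c) /\
  (forall f (a b : fin (farity f) -> A),
      (forall i, fst th (a i) (b i)) -> fst th (fun_of A f a) (fun_of A f b)) /\
  (forall r s, rel_of A r s -> snd th r s) /\
  (forall r (s s' : fin (rarity r) -> A),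
      (forall i, fst th (s i) (s' i)) -> snd th r s -> snd th r s').

Definition qcarrier (S : signature) (A : structure S) (e : A -> A -> Prop) : Type :=
  {P : A -> Prop | exists a, P = e a}.
Arguments qcarrier {S} A e.
Definition qrep (S : signature) (A : structure S) (e : A -> A -> Prop)
  (x : qcarrier A e) : A :=
  proj1_sig (constructive_indefinite_description _ (proj2_sig x)).
Definition qcls (S : signature) (A : structure S) (e : A -> A -> Prop)
  (a : A) : qcarrier A e :=
  exist _ (e a) (ex_intro _ a eq_refl).

Definition quotient (S : signature) (A : structure S) (th : cpair A) : structure S :=
  {| carrier := qcarrier A (fst th);
     fun_of := fun f args => qcls (fst th) (fun_of A f (fun i => qrep (args i)));
     rel_of := fun r args => snd th r (fun i => qrep (args i)) |}.

Definition kcong (S : signature) (Ax : qi S -> Prop) (A : structure S)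
  (psi : cpair A) : Prop :=
  is_congruence psi /\ Mod Ax (quotient psi).

Definition cle (S : signature) (A : structure S) (p q : cpair A) : Prop :=
  (forall a b, fst p a b -> fst q a b) /\ (forall r s, snd p r s -> snd q r s).
Definition ceq (S : signature) (A : structure S) (p q : cpair A) : Prop :=
  cle p q /\ cle q p.

Definition kgen (S : signature) (Ax : qi S -> Prop) (A : structure S)
  (Q : cpair A -> Prop) : cpair A :=
  (fun a b => forall chi, kcong Ax chi -> Q chi -> fst chi a b,
   fun r s => forall chi, kcong Ax chi -> Q chi -> snd chi r s).

Definition kjoin (S : signature) (Ax : qi S -> Prop) (A : structure S)
  (P : cpair A -> Prop) : cpair A :=
  kgen Ax (fun chi => forall psi, P psi -> cle psi chi).

Inductive fatom (S : signature) (A : structure S) : Type :=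
| FEq : A -> A -> fatom A
| FRel : forall r : rsym S, (fin (rarity r) -> A) -> fatom A.
Arguments FEq {S A} _ _.
Arguments FRel {S A} r _.

Definition fatom_in (S : signature) (A : structure S) (th : cpair A)
  (al : fatom A) : Prop :=
  match al with
  | FEq a b => fst th a b
  | FRel r s => snd th r s
  end.

Definition fatom_map (S : signature) (A : structure S) (h : A -> A)
  (al : fatom A) : fatom A :=
  match al with
  | FEq a b => FEq (h a) (h b)
  | FRel r s => FRel r (fun i => h (s i))
  end.

Definition con (S : signature) (Ax : qi S -> Prop) (A : structure S)
  (al : fatom A) : cpair A :=
  kgen Ax (fun chi => fatom_in chi al).

Definition conj_list (S : signature) (Ax : qi S -> Prop) (A : structure S)
  (l : list (fatom A)) : cpair A :=
  kjoin Ax (fun psi => exists al, In al l /\ psi = con Ax al).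

Definition compact (S : signature) (Ax : qi S -> Prop) (A : structure S)
  (phi : cpair A) : Prop :=
  exists l : list (fatom A), ceq phi (conj_list Ax l).

Definition Tn (S : signature) (Ax : qi S -> Prop) (F : structure S) : Type :=
  {phi : cpair F | compact Ax phi}.

Definition is_join (S : signature) (Ax : qi S -> Prop) (F : structure S)
  (x y z : Tn Ax F) : Prop :=
  ceq (proj1_sig z)
      (kjoin Ax (fun psi => psi = proj1_sig x \/ psi = proj1_sig y)).

Definition ehat_rel (S : signature) (Ax : qi S -> Prop) (F : structure S)
  (eps : hom F F) (x y : Tn Ax F) : Prop :=
  exists l : list (fatom F),
    ceq (proj1_sig x) (conj_list Ax l) /\
    ceq (proj1_sig y) (conj_list Ax (map (fatom_map eps) l)).

Definition ConS (S : signature) (Ax : qi S -> Prop) (F : structure S)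
  (th : Tn Ax F -> Tn Ax F -> Prop) : Prop :=
  (forall x, th x x) /\
  (forall x y, th x y -> th y x) /\
  (forall x y z, th x y -> th y z -> th x z) /\
  (forall x y z x' y' z', is_join x y z -> is_join x' y' z' ->
      th x x' -> th y y' -> th z z') /\
  (forall (eps : hom F F) x y x' y', ehat_rel eps x x' -> ehat_rel eps y y' ->
      th x y -> th x' y').
Arguments is_free {S} Ax n F gen.
Arguments ConS {S} Ax F th.

(* A quasi-identity [&_i alpha_i => beta] instantiated in the free structure [F] is a pair
   [x <= y] of compact K-congruences, [x] generated by the [alpha_i] and [y] by [x] and [beta]:
   it holds in a model [A] under [h : F -> A] iff [h] factoring through [F / x] implies [h]
   factoring through [F / y].  So a theory [T] is sent to the relation "every homomorphism into
   a model of [T] factors through [F / x] iff it factors through [F / y]", which respects joins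
   and every endomorphism of [F]; when [T] is determined by its quasi-identities in [n]
   variables, [T] is recovered from it.  Conversely a congruence [th] of [S_n] gives the theory
   of the models of K on which [th]-related elements impose the same conditions; that this
   theory returns [th] is seen in the quotient of [F] by the directed union of the elements
   lying below a fixed [x] modulo [th], which is a K-congruence because [F] is free. *)

From Stdlib Require Import List ClassicalEpsilon FunctionalExtensionality
  PropExtensionality ProofIrrelevance Lia PeanoNat.

Section Terms.
Context {S : signature}.

Lemma eval_hom {A B : structure S} (h : hom A B) {V : Type} (w : V -> A) (t : term S V) :
  h (eval A w t) = eval B (fun k => h (w k)) t.
Proof.
  induction t as [x|f args IH]; simpl; [reflexivity|].
  rewrite (hom_fun h). f_equal. apply functional_extensionality; intro i; apply IH.
Qed.

Lemma eval_occurs (A : structure S) (v w : nat -> A) (t : term S nat) :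
  (forall k, occurs_term k t -> v k = w k) -> eval A v t = eval A w t.
Proof.
  induction t as [x|f args IH]; simpl; intro H; [apply H; reflexivity|].
  f_equal. apply functional_extensionality; intro i; apply IH.
  intros k Hk; apply H; eauto.
Qed.

Lemma holds_occurs (A : structure S) (v w : nat -> A) (a : atom S nat) :
  (forall k, occurs_atom k a -> v k = w k) -> (holds A v a <-> holds A w a).
Proof.
  destruct a as [s t|r ts]; simpl; intro H.
  - rewrite (eval_occurs A v w s), (eval_occurs A v w t); [tauto| |];
      intros; apply H; auto.
  - replace (fun i => eval A v (ts i)) with (fun i => eval A w (ts i)); [tauto|].
    apply functional_extensionality; intro i; symmetry.
    apply eval_occurs; intros; apply H; eauto.
Qed.

Fixpoint tmap {V W : Type} (g : V -> W) (t : term S V) : term S W :=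
  match t with
  | Var x => Var (g x)
  | App f args => App f (fun i => tmap g (args i))
  end.

Lemma eval_tmap (A : structure S) {V W : Type} (g : V -> W) (v : W -> A) (t : term S V) :
  eval A v (tmap g t) = eval A (fun x => v (g x)) t.
Proof.
  induction t as [x|f args IH]; simpl; [reflexivity|].
  f_equal; apply functional_extensionality; auto.
Qed.

Lemma occurs_tmap_fin {n : nat} (t : term S (fin n)) k :
  occurs_term k (tmap (@proj1_sig _ _) t) -> k < n.
Proof.
  induction t as [x|f args IH]; simpl.
  - intros ->. apply (proj2_sig x).
  - intros [i Hi]. eauto.
Qed.

Definition eval_atom (A : structure S) {V : Type} (w : V -> A) (a : atom S V) : fatom A :=
  match a with
  | AEq s t => FEq (eval A w s) (eval A w t)
  | ARel r ts => FRel r (fun i => eval A w (ts i))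
  end.

Definition hom_comp {A B C : structure S} (h : hom B C) (g : hom A B) : hom A C.
Proof.
  refine (@Hom S A C (fun a => h (g a)) _ _).
  - intros f args. rewrite (hom_fun g), (hom_fun h). reflexivity.
  - intros r args H. apply (hom_rel h), (hom_rel g), H.
Defined.

End Terms.

Section Congruences.
Context {S : signature} {A : structure S}.

Lemma cle_refl (p : cpair A) : cle p p.
Proof. split; auto. Qed.

Lemma cle_trans (p q r : cpair A) : cle p q -> cle q r -> cle p r.
Proof. intros [H1 H2] [H3 H4]; split; auto. Qed.

Lemma ceq_refl (p : cpair A) : ceq p p.
Proof. split; apply cle_refl. Qed.

Lemma fatom_in_cle (p q : cpair A) (al : fatom A) :
  cle p q -> fatom_in p al -> fatom_in q al.
Proof. intros [H1 H2]; destruct al; simpl; auto. Qed.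

Definition qsat (th : cpair A) (q : qi S) : Prop :=
  forall w : nat -> A,
    (forall a, In a (prems q) -> fatom_in th (eval_atom A w a)) ->
    fatom_in th (eval_atom A w (concl q)).

Context {th : cpair A} (Hc : is_congruence th).

Lemma cong_refl a : fst th a a.
Proof. destruct Hc as (H & _); auto. Qed.

Lemma cong_sym a b : fst th a b -> fst th b a.
Proof. destruct Hc as (_ & H & _); auto. Qed.

Lemma cong_trans a b c : fst th a b -> fst th b c -> fst th a c.
Proof. destruct Hc as (_ & _ & H & _); eauto. Qed.

Lemma cong_fun f (a b : fin (farity f) -> A) :
  (forall i, fst th (a i) (b i)) -> fst th (fun_of A f a) (fun_of A f b).
Proof. destruct Hc as (_ & _ & _ & H & _); auto. Qed.

Lemma cong_rel r s : rel_of A r s -> snd th r s.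
Proof. destruct Hc as (_ & _ & _ & _ & H & _); auto. Qed.

Lemma cong_rel_compat r (s s' : fin (rarity r) -> A) :
  (forall i, fst th (s i) (s' i)) -> snd th r s -> snd th r s'.
Proof. destruct Hc as (_ & _ & _ & _ & _ & H); eauto. Qed.

Lemma eval_cong {V : Type} (v w : V -> A) (t : term S V) :
  (forall k, fst th (v k) (w k)) -> fst th (eval A v t) (eval A w t).
Proof.
  intro H; induction t as [x|f args IH]; simpl; auto using cong_fun.
Qed.

End Congruences.

Definition ker {S : signature} {A B : structure S} (h : hom A B) : cpair A :=
  (fun a b => h a = h b, fun r s => rel_of B r (fun i => h (s i))).

Definition factors {S : signature} {A B : structure S} (h : hom A B) (u : cpair A) : Prop :=
  cle u (ker h).

Section Kernels.
Context {S : signature} {A B : structure S} (h : hom A B).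

Lemma is_congruence_ker : is_congruence (ker h).
Proof.
  split; [|split; [|split; [|split; [|split]]]]; simpl.
  - reflexivity.
  - intros; symmetry; auto.
  - intros a b c -> ->; auto.
  - intros f a b H. rewrite !(hom_fun h). f_equal. apply functional_extensionality; auto.
  - intros r s H. apply (hom_rel h); auto.
  - intros r s s' H1 H2. replace (fun i => h (s' i)) with (fun i => h (s i)); auto.
    apply functional_extensionality; auto.
Qed.

Lemma ker_eval_atom {V : Type} (w : V -> A) (a : atom S V) :
  fatom_in (ker h) (eval_atom A w a) <-> holds B (fun k => h (w k)) a.
Proof.
  destruct a as [s t|r ts]; simpl; rewrite ?eval_hom; [tauto|].
  replace (fun i => h (eval A w (ts i))) with (fun i => eval B (fun k => h (w k)) (ts i));
    [tauto|].
  apply functional_extensionality; intro i; rewrite eval_hom; auto.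
Qed.

Lemma ker_fatom_map (eps : hom A A) (al : fatom A) :
  fatom_in (ker h) (fatom_map eps al) <-> fatom_in (ker (hom_comp h eps)) al.
Proof. destruct al; simpl; tauto. Qed.

End Kernels.

Section Quotient.
Context {S : signature} {A : structure S} {th : cpair A} (Hc : is_congruence th).

Lemma qrep_spec (x : qcarrier A (fst th)) : proj1_sig x = fst th (qrep x).
Proof. unfold qrep. destruct constructive_indefinite_description; auto. Qed.

Lemma qcls_qrep a : fst th a (qrep (qcls (fst th) a)).
Proof.
  pose proof (qrep_spec (qcls (fst th) a)) as E; simpl in E.
  rewrite E. apply (cong_refl Hc).
Qed.

Lemma qcarrier_eq (x y : qcarrier A (fst th)) : fst th (qrep x) (qrep y) -> x = y.
Proof.
  intro H.
  assert (E : proj1_sig x = proj1_sig y).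
  { rewrite (qrep_spec x), (qrep_spec y).
    apply functional_extensionality; intro z.
    pose proof (cong_sym Hc); pose proof (cong_trans Hc).
    apply propositional_extensionality; split; eauto. }
  destruct x as [P HP], y as [Q HQ]; simpl in E; subst.
  f_equal; apply proof_irrelevance.
Qed.

Lemma eval_quotient {V : Type} (v : V -> quotient th) (t : term S V) :
  fst th (qrep (eval (quotient th) v t)) (eval A (fun k => qrep (v k)) t).
Proof.
  induction t as [x|f args IH]; simpl; [apply (cong_refl Hc)|].
  eapply (cong_trans Hc); [apply (cong_sym Hc), qcls_qrep|].
  apply (cong_fun Hc). apply IH.
Qed.

Lemma holds_quotient {V : Type} (v : V -> quotient th) (w : V -> A) (a : atom S V) :
  (forall k, fst th (qrep (v k)) (w k)) ->
  (holds (quotient th) v a <-> fatom_in th (eval_atom A w a)).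
Proof.
  intro Hvw.
  assert (Ev : forall t, fst th (qrep (eval (quotient th) v t)) (eval A w t)).
  { intro t. eapply (cong_trans Hc); [apply eval_quotient|]. apply (eval_cong Hc); auto. }
  destruct a as [s t | r ts]; simpl; split; intro H.
  - pose proof (Ev s) as Es; rewrite H in Es.
    eapply (cong_trans Hc); [apply (cong_sym Hc), Es|apply Ev].
  - apply qcarrier_eq.
    eapply (cong_trans Hc); [apply (Ev s)|].
    eapply (cong_trans Hc); [exact H|apply (cong_sym Hc), Ev].
  - eapply (cong_rel_compat Hc); [|exact H]. intro i; apply Ev.
  - eapply (cong_rel_compat Hc); [|exact H]. intro i; apply (cong_sym Hc), Ev.
Qed.

Lemma sat_quotient (q : qi S) : sat (quotient th) q <-> qsat th q.
Proof.
  split.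
  - intros H w Hp.
    set (v := fun k => qcls (fst th) (w k) : quotient th).
    assert (Hvw : forall k, fst th (qrep (v k)) (w k)).
    { intro k. apply (cong_sym Hc), qcls_qrep. }
    apply (holds_quotient v w _ Hvw), H.
    intros a Ha. apply (holds_quotient v w _ Hvw); auto.
  - intros H v Hp.
    assert (Hvv : forall k, fst th (qrep (v k)) (qrep (v k))) by (intro; apply (cong_refl Hc)).
    apply (holds_quotient v _ _ Hvv), H.
    intros a Ha. apply (holds_quotient v _ _ Hvv); auto.
Qed.

Definition quotient_map : hom A (quotient th).
Proof.
  refine (@Hom S A (quotient th) (fun a => qcls (fst th) a) _ _).
  - intros f args. apply qcarrier_eq.
    eapply (cong_trans Hc); [apply (cong_sym Hc), qcls_qrep|].
    eapply (cong_trans Hc); [|apply qcls_qrep].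
    apply (cong_fun Hc). intro i. apply qcls_qrep.
  - intros r args Hr. simpl.
    eapply (cong_rel_compat Hc); [|apply (cong_rel Hc), Hr]. intro i; apply qcls_qrep.
Defined.

Lemma ker_quotient_map : ceq (ker quotient_map) th.
Proof.
  split; split; simpl.
  - intros a b K. pose proof (qcls_qrep a) as Ka. rewrite K in Ka.
    eapply (cong_trans Hc); [exact Ka|]. apply (cong_sym Hc), qcls_qrep.
  - intros r s K. eapply (cong_rel_compat Hc); [|exact K].
    intro i; apply (cong_sym Hc), qcls_qrep.
  - intros a b K. apply qcarrier_eq.
    eapply (cong_trans Hc); [apply (cong_sym Hc), qcls_qrep|].
    eapply (cong_trans Hc); [exact K|apply qcls_qrep].
  - intros r s K. eapply (cong_rel_compat Hc); [|exact K]. intro i; apply qcls_qrep.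
Qed.

Lemma factors_quotient_map (u : cpair A) : factors quotient_map u <-> cle u th.
Proof.
  destruct ker_quotient_map as [K1 K2].
  split; intro H; eapply cle_trans; eauto.
Qed.

End Quotient.

Section KCongruences.
Context {S : signature} (Ax : qi S -> Prop) {A : structure S}.

Lemma kcong_iff (th : cpair A) :
  kcong Ax th <-> is_congruence th /\ forall q, Ax q -> qsat th q.
Proof.
  unfold kcong, Mod.
  split; intros [Hc H]; split; auto; intros q Hq; apply (sat_quotient Hc); auto.
Qed.

Lemma kcong_congruence (th : cpair A) : kcong Ax th -> is_congruence th.
Proof. intros [H _]; auto. Qed.

Lemma kcong_qsat (th : cpair A) q : kcong Ax th -> Ax q -> qsat th q.
Proof. intros H; apply kcong_iff in H; destruct H; auto. Qed.

Lemma kcong_ker {B : structure S} (h : hom A B) : Mod Ax B -> kcong Ax (ker h).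
Proof.
  intro HB. apply kcong_iff. split; [apply is_congruence_ker|].
  intros q Hq w Hp. apply ker_eval_atom, (HB q Hq).
  intros a Ha. apply ker_eval_atom; auto.
Qed.

Lemma kgen_le (Q : cpair A -> Prop) chi : kcong Ax chi -> Q chi -> cle (kgen Ax Q) chi.
Proof. intros H1 H2; split; simpl; intros; auto. Qed.

Lemma fatom_in_kgen (Q : cpair A -> Prop) al :
  (forall chi, kcong Ax chi -> Q chi -> fatom_in chi al) -> fatom_in (kgen Ax Q) al.
Proof. destruct al; simpl; intros H chi H1 H2; apply (H chi H1 H2). Qed.

Lemma kcong_kgen (Q : cpair A -> Prop) : kcong Ax (kgen Ax Q).
Proof.
  apply kcong_iff. split.
  - repeat split; simpl; intros until chi; intros Hk HQ;
      pose proof (kcong_congruence _ Hk) as Hc.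
    + apply (cong_refl Hc).
    + apply (cong_sym Hc); auto.
    + eapply (cong_trans Hc); eauto.
    + apply (cong_fun Hc); intro i; auto.
    + apply (cong_rel Hc); auto.
    + eapply (cong_rel_compat Hc); [|eauto]. intro i; auto.
  - intros q Hq w Hp. apply fatom_in_kgen. intros chi Hk HQ.
    apply (kcong_qsat chi q Hk Hq). intros a Ha.
    eapply fatom_in_cle; [apply (kgen_le Q chi Hk HQ)|]. auto.
Qed.

Lemma kjoin_ub (P : cpair A -> Prop) p : P p -> cle p (kjoin Ax P).
Proof. intro Hp; split; simpl; intros ? ? ? chi _ H1; destruct (H1 p Hp); auto. Qed.

Lemma kjoin_lub (P : cpair A -> Prop) chi :
  kcong Ax chi -> (forall p, P p -> cle p chi) -> cle (kjoin Ax P) chi.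
Proof. intros; apply kgen_le; auto. Qed.

Lemma kcong_kjoin (P : cpair A -> Prop) : kcong Ax (kjoin Ax P).
Proof. apply kcong_kgen. Qed.

Lemma con_in (al : fatom A) : fatom_in (con Ax al) al.
Proof. apply fatom_in_kgen; auto. Qed.

Lemma con_le (al : fatom A) chi : kcong Ax chi -> fatom_in chi al -> cle (con Ax al) chi.
Proof. intros; apply kgen_le; auto. Qed.

Lemma conj_list_le (l : list (fatom A)) chi :
  kcong Ax chi -> (cle (conj_list Ax l) chi <-> forall al, In al l -> fatom_in chi al).
Proof.
  intro Hk; split.
  - intros H al Hal. eapply fatom_in_cle; [|apply (con_in al)].
    eapply cle_trans; [|exact H]. apply kjoin_ub. eauto.
  - intro H. apply kjoin_lub; auto. intros p (al & Hal & ->). apply con_le; auto.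
Qed.

Lemma conj_list_in (l : list (fatom A)) al : In al l -> fatom_in (conj_list Ax l) al.
Proof.
  intro H. apply (conj_list_le l (conj_list Ax l) (kcong_kjoin _)); auto.
  apply cle_refl.
Qed.

Lemma conj_list_compact (l : list (fatom A)) : compact Ax (conj_list Ax l).
Proof. exists l; apply ceq_refl. Qed.

Lemma kcong_ceq (p q : cpair A) : kcong Ax p -> ceq p q -> kcong Ax q.
Proof.
  intros Hk [Hpq Hqp]. apply kcong_iff in Hk. destruct Hk as [Hc Hq].
  apply kcong_iff. split.
  - destruct Hpq as [P1 P2], Hqp as [Q1 Q2].
    repeat split; intros.
    + apply P1, (cong_refl Hc).
    + apply P1, (cong_sym Hc); auto.
    + apply P1; eapply (cong_trans Hc); eauto.
    + apply P1, (cong_fun Hc); auto.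
    + apply P2, (cong_rel Hc); auto.
    + apply P2; eapply (cong_rel_compat Hc); eauto.
  - intros q0 Hq0 w Hp. eapply fatom_in_cle; [exact Hpq|].
    apply Hq; auto. intros a Ha. eapply fatom_in_cle; [exact Hqp|]. auto.
Qed.

Lemma compact_kcong (x : cpair A) : compact Ax x -> kcong Ax x.
Proof.
  intros [l [H1 H2]]. eapply kcong_ceq; [apply kcong_kjoin|]. split; eauto.
Qed.

Lemma factors_conj_list {B : structure S} (h : hom A B) u l :
  Mod Ax B -> ceq u (conj_list Ax l) ->
  (factors h u <-> forall al, In al l -> fatom_in (ker h) al).
Proof.
  intros HB [H1 H2]. unfold factors. rewrite <- (conj_list_le l (ker h) (kcong_ker h HB)).
  split; intro H; eapply cle_trans; eauto.
Qed.

End KCongruences.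

Section CompactJoins.
Context {S : signature} {Ax : qi S -> Prop} {F : structure S}.

Lemma kcong_Tn (x : Tn Ax F) : kcong Ax (proj1_sig x).
Proof. apply compact_kcong, (proj2_sig x). Qed.

Lemma congruence_Tn (x : Tn Ax F) : is_congruence (proj1_sig x).
Proof. apply (kcong_congruence Ax), kcong_Tn. Qed.

Lemma conj_list_incl (l m : list (fatom F)) :
  incl l m -> cle (conj_list Ax l) (conj_list Ax m).
Proof.
  intro Hlm. apply conj_list_le; [apply kcong_kjoin|].
  intros al Hal. apply conj_list_in, Hlm, Hal.
Qed.

Lemma compact_kjoin2 (x z : Tn Ax F) :
  compact Ax (kjoin Ax (fun p => p = proj1_sig x \/ p = proj1_sig z)).
Proof.
  destruct x as [x [lx [Hx1 Hx2]]], z as [z [lz [Hz1 Hz2]]]; simpl.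
  exists (lx ++ lz). split.
  - apply kjoin_lub; [apply kcong_kjoin|]. intros p [->| ->];
      (eapply cle_trans; [eassumption|]); apply conj_list_incl;
      intros al Hal; apply in_or_app; auto.
  - apply conj_list_le; [apply kcong_kjoin|].
    intros al Hal. apply in_app_or in Hal as [Hal|Hal];
      (eapply fatom_in_cle; [|apply conj_list_in; exact Hal]);
      (eapply cle_trans; [eassumption|]); apply kjoin_ub; auto.
Qed.

Definition tjoin (x z : Tn Ax F) : Tn Ax F := exist _ _ (compact_kjoin2 x z).

Lemma tjoin_l (x z : Tn Ax F) : cle (proj1_sig x) (proj1_sig (tjoin x z)).
Proof. apply kjoin_ub; auto. Qed.

Lemma tjoin_r (x z : Tn Ax F) : cle (proj1_sig z) (proj1_sig (tjoin x z)).
Proof. apply kjoin_ub; auto. Qed.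

Lemma tjoin_lub (x z c : Tn Ax F) :
  cle (proj1_sig x) (proj1_sig c) -> cle (proj1_sig z) (proj1_sig c) ->
  cle (proj1_sig (tjoin x z)) (proj1_sig c).
Proof. intros; apply kjoin_lub; [apply kcong_Tn|]. intros p [-> | ->]; auto. Qed.

Lemma factors_is_join {A : structure S} (h : hom F A) (x y z : Tn Ax F) :
  Mod Ax A -> is_join x y z ->
  (factors h (proj1_sig z) <-> factors h (proj1_sig x) /\ factors h (proj1_sig y)).
Proof.
  intros HA [H1 H2]. unfold factors. split.
  - intro H; split; do 2 (eapply cle_trans; [|eassumption]); apply kjoin_ub; auto.
  - intros [Hx Hy]. eapply cle_trans; [exact H1|].
    apply kjoin_lub; [apply kcong_ker; auto|]. intros p [->| ->]; auto.
Qed.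

End CompactJoins.

(* [z] lies below [x] in the quotient semilattice [T_n / th]. *)
Definition le_mod {S : signature} {Ax : qi S -> Prop} {F : structure S}
  (th : Tn Ax F -> Tn Ax F -> Prop) (z x : Tn Ax F) : Prop := th (tjoin x z) x.

Section ConS.
Context {S : signature} {Ax : qi S -> Prop} {F : structure S}
  {th : Tn Ax F -> Tn Ax F -> Prop} (Hth : ConS Ax F th).

Lemma conS_refl x : th x x.
Proof. destruct Hth as (H & _); auto. Qed.

Lemma conS_sym x y : th x y -> th y x.
Proof. destruct Hth as (_ & H & _); auto. Qed.

Lemma conS_trans x y z : th x y -> th y z -> th x z.
Proof. destruct Hth as (_ & _ & H & _); eauto. Qed.

Lemma conS_tjoin a a' b b' : th a a' -> th b b' -> th (tjoin a b) (tjoin a' b').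
Proof.
  destruct Hth as (_ & _ & _ & J & _). intros.
  apply (J a b (tjoin a b) a' b' (tjoin a' b')); auto; apply ceq_refl.
Qed.

(* [u'] is a join of [u] with itself, so compatibility with joins forces [th u u']. *)
Lemma conS_cle u u' :
  cle (proj1_sig u) (proj1_sig u') -> cle (proj1_sig u') (proj1_sig u) -> th u u'.
Proof.
  intros H1 H2. destruct Hth as (_ & _ & _ & J & _).
  assert (Ju : is_join u u u).
  { split; [apply kjoin_ub; auto|].
    apply kjoin_lub; [apply kcong_Tn|]. intros p [->| ->]; apply cle_refl. }
  assert (Ju' : is_join u u u').
  { destruct Ju as [K1 K2]. split; eapply cle_trans; eauto. }
  apply (J u u u u u u' Ju Ju'); apply conS_refl.
Qed.

Lemma le_mod_refl x : le_mod th x x.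
Proof. apply conS_cle; [apply tjoin_lub; apply cle_refl|apply tjoin_l]. Qed.

Lemma le_mod_cle z z' x :
  cle (proj1_sig z') (proj1_sig z) -> le_mod th z x -> le_mod th z' x.
Proof.
  unfold le_mod. intros Hle HI.
  set (a := tjoin x z'). set (b := tjoin x z).
  assert (E1 : th (tjoin a b) (tjoin a x)) by (apply conS_tjoin; auto using conS_refl).
  assert (E2 : th (tjoin a b) b).
  { apply conS_cle; [|apply tjoin_r].
    apply tjoin_lub; [|apply cle_refl]. apply tjoin_lub; [apply tjoin_l|].
    eapply cle_trans; [exact Hle|apply tjoin_r]. }
  assert (E3 : th (tjoin a x) a).
  { apply conS_cle; [apply tjoin_lub; [apply cle_refl|apply tjoin_l]|apply tjoin_l]. }
  apply (conS_trans _ _ _ (conS_sym _ _ E3)), (conS_trans _ _ _ (conS_sym _ _ E1)).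
  apply (conS_trans _ _ _ E2 HI).
Qed.

Lemma le_mod_tjoin z1 z2 x : le_mod th z1 x -> le_mod th z2 x -> le_mod th (tjoin z1 z2) x.
Proof.
  unfold le_mod. intros H1 H2.
  assert (E1 : th (tjoin (tjoin x z1) z2) (tjoin x z2))
    by (apply conS_tjoin; auto using conS_refl).
  assert (E2 : th (tjoin x (tjoin z1 z2)) (tjoin (tjoin x z1) z2)).
  { apply conS_cle.
    - apply tjoin_lub.
      + eapply cle_trans; apply tjoin_l.
      + apply tjoin_lub; [eapply cle_trans; [apply tjoin_r|apply tjoin_l]|apply tjoin_r].
    - apply tjoin_lub; [apply tjoin_lub|].
      + apply tjoin_l.
      + eapply cle_trans; [apply tjoin_l|apply tjoin_r].
      + eapply cle_trans; apply tjoin_r. }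
  eapply conS_trans; [exact E2|]. eapply conS_trans; eauto.
Qed.

Lemma le_mod_conS z z' x : th z z' -> le_mod th z x -> le_mod th z' x.
Proof.
  unfold le_mod; intros Hz HI. eapply conS_trans; [|exact HI].
  apply conS_tjoin; [apply conS_refl|apply conS_sym; auto].
Qed.

Lemma le_mod_antisym x y : le_mod th y x -> le_mod th x y -> th x y.
Proof.
  unfold le_mod; intros H1 H2.
  assert (E : th (tjoin x y) (tjoin y x))
    by (apply conS_cle; apply tjoin_lub; (apply tjoin_l || apply tjoin_r)).
  eapply conS_trans; [apply conS_sym; eauto|]. eapply conS_trans; eauto.
Qed.

End ConS.

(* The union of the classes [z <= x] (mod [th]); it is directed, hence a congruence. *)
Definition lower_con {S : signature} {Ax : qi S -> Prop} {F : structure S}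
  (th : Tn Ax F -> Tn Ax F -> Prop) (x : Tn Ax F) : cpair F :=
  (fun a b => exists z, le_mod th z x /\ fst (proj1_sig z) a b,
   fun r s => exists z, le_mod th z x /\ snd (proj1_sig z) r s).

Section LowerCon.
Context {S : signature} {Ax : qi S -> Prop} {F : structure S}
  {th : Tn Ax F -> Tn Ax F -> Prop} (Hth : ConS Ax F th) (x : Tn Ax F).

Lemma le_mod_bound_list {X : Type} (L : list X) (P : X -> Tn Ax F -> Prop) :
  (forall a z z', cle (proj1_sig z) (proj1_sig z') -> P a z -> P a z') ->
  (forall a, In a L -> exists z, le_mod th z x /\ P a z) ->
  exists z, le_mod th z x /\ forall a, In a L -> P a z.
Proof.
  intro Hmono. induction L as [|a L IH]; intro HL.
  - exists x; split; [apply (le_mod_refl Hth)|]. intros a [].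
  - destruct (HL a (or_introl eq_refl)) as (z1 & I1 & P1).
    destruct IH as (z2 & I2 & P2); [intros; apply HL; right; auto|].
    exists (tjoin z1 z2). split; [apply (le_mod_tjoin Hth); auto|].
    intros b [<-|Hb]; eapply Hmono; [apply tjoin_l|auto|apply tjoin_r|auto].
Qed.

Lemma le_mod_bound_fin {k : nat} (P : fin k -> Tn Ax F -> Prop) :
  (forall i z z', cle (proj1_sig z) (proj1_sig z') -> P i z -> P i z') ->
  (forall i, exists z, le_mod th z x /\ P i z) ->
  exists z, le_mod th z x /\ forall i, P i z.
Proof.
  intros Hmono Hi.
  destruct (le_mod_bound_list (seq 0 k) (fun m z => forall Hm : m < k, P (exist _ m Hm) z))
    as (z & Iz & Pz).
  - intros m z z' Hle Hz Hm. eapply Hmono; eauto.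
  - intros m Hm. apply in_seq in Hm. destruct (Hi (exist _ m (proj2 Hm))) as (z & Iz & Pz).
    exists z; split; auto. intro Hm'. rewrite (proof_irrelevance _ Hm' (proj2 Hm)); auto.
  - exists z; split; auto. intros [m Hm]. apply Pz, in_seq; lia.
Qed.

Lemma fatom_in_lower_con al :
  fatom_in (lower_con th x) al <-> exists z, le_mod th z x /\ fatom_in (proj1_sig z) al.
Proof. destruct al; simpl; tauto. Qed.

Lemma lower_con_ub z : le_mod th z x -> cle (proj1_sig z) (lower_con th x).
Proof. intro HI; split; simpl; intros; eauto. Qed.

Lemma lower_con_list (L : list (fatom F)) :
  (forall al, In al L -> fatom_in (lower_con th x) al) ->
  exists z, le_mod th z x /\ forall al, In al L -> fatom_in (proj1_sig z) al.
Proof.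
  intro HL. apply le_mod_bound_list.
  - intros al z z' Hle. apply fatom_in_cle, Hle.
  - intros al Hal. apply fatom_in_lower_con, HL, Hal.
Qed.

Lemma congruence_lower_con : is_congruence (lower_con th x).
Proof.
  pose proof (le_mod_refl Hth x) as Ix.
  split; [|split; [|split; [|split; [|split]]]]; simpl.
  - intro a. exists x; split; auto. apply (cong_refl (congruence_Tn x)).
  - intros a b (z & Iz & Hz). exists z; split; auto. apply (cong_sym (congruence_Tn z)), Hz.
  - intros a b c (z1 & I1 & H1) (z2 & I2 & H2).
    exists (tjoin z1 z2); split; [apply (le_mod_tjoin Hth); auto|].
    eapply (cong_trans (congruence_Tn _)); [apply (tjoin_l z1 z2), H1|apply (tjoin_r z1 z2), H2].
  - intros f a b Hab.
    destruct (le_mod_bound_fin (fun i z => fst (proj1_sig z) (a i) (b i))) as (z & Iz & Az).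
    + intros i z z' Hle. apply Hle.
    + apply Hab.
    + exists z; split; auto. apply (cong_fun (congruence_Tn z)), Az.
  - intros r s Hr. exists x; split; auto. apply (cong_rel (congruence_Tn x)), Hr.
  - intros r s s' Hss (z1 & I1 & H1).
    destruct (le_mod_bound_fin (fun i z => fst (proj1_sig z) (s i) (s' i))) as (z2 & I2 & A2).
    + intros i z z' Hle. apply Hle.
    + apply Hss.
    + exists (tjoin z1 z2); split; [apply (le_mod_tjoin Hth); auto|].
      eapply (cong_rel_compat (congruence_Tn _)); [intro i; apply (tjoin_r z1 z2), A2|].
      apply (tjoin_l z1 z2), H1.
Qed.

Lemma kcong_lower_con : kcong Ax (lower_con th x).
Proof.
  apply kcong_iff. split; [apply congruence_lower_con|].
  intros q Hq w Hp.
  destruct (lower_con_list (map (eval_atom F w) (prems q))) as (z & Iz & Az).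
  - intros al Hal. apply in_map_iff in Hal. destruct Hal as (a & <- & Ha). auto.
  - eapply fatom_in_cle; [apply lower_con_ub, Iz|].
    apply (kcong_qsat Ax _ q (kcong_Tn z) Hq). intros a Ha. apply Az, in_map, Ha.
Qed.

Lemma le_mod_of_cle_lower_con u : cle (proj1_sig u) (lower_con th x) -> le_mod th u x.
Proof.
  intro Hu. destruct u as [u0 [lu [Hu1 Hu2]]] eqn:Eu; simpl in Hu.
  destruct (lower_con_list lu) as (z & Iz & Az).
  - intros al Hal. eapply fatom_in_cle; [exact Hu|].
    eapply fatom_in_cle; [exact Hu2|]. apply conj_list_in; auto.
  - rewrite <- Eu. apply (le_mod_cle Hth z); auto. rewrite Eu; simpl.
    eapply cle_trans; [exact Hu1|]. apply conj_list_le; [apply kcong_Tn|]; auto.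
Qed.

End LowerCon.

Section Correspondence.
Context {S : signature} {Ax : qi S -> Prop} {F : structure S}.

Definition con_of_theory (T : qi S -> Prop) (x y : Tn Ax F) : Prop :=
  forall A, Mod T A -> forall h : hom F A,
    factors h (proj1_sig x) <-> factors h (proj1_sig y).

Definition model_of_con (th : Tn Ax F -> Tn Ax F -> Prop) (A : structure S) : Prop :=
  Mod Ax A /\ forall (h : hom F A) x y, th x y ->
    (factors h (proj1_sig x) <-> factors h (proj1_sig y)).

Definition theory_of_con (th : Tn Ax F -> Tn Ax F -> Prop) (q : qi S) : Prop :=
  forall A, model_of_con th A -> sat A q.

Lemma factors_ehat {A : structure S} (h : hom F A) (eps : hom F F) (x x' : Tn Ax F) :
  Mod Ax A -> ehat_rel eps x x' ->
  (factors h (proj1_sig x') <-> factors (hom_comp h eps) (proj1_sig x)).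
Proof.
  intros HA (l & Hx & Hx').
  rewrite (factors_conj_list Ax h _ _ HA Hx'), (factors_conj_list Ax _ _ _ HA Hx).
  split; intros Z al Hal.
  - apply ker_fatom_map, Z, in_map, Hal.
  - apply in_map_iff in Hal as (b & <- & Hb). apply ker_fatom_map; auto.
Qed.

Lemma conS_con_of_theory (T : qi S -> Prop) :
  (forall A, Mod T A -> Mod Ax A) -> ConS Ax F (con_of_theory T).
Proof.
  intro HT. unfold con_of_theory.
  split; [|split; [|split; [|split]]].
  - intros x A HA h; tauto.
  - intros x y H A HA h; specialize (H A HA h); tauto.
  - intros x y z H1 H2 A HA h; specialize (H1 A HA h); specialize (H2 A HA h); tauto.
  - intros x y z x' y' z' J J' H1 H2 A HA h.
    specialize (H1 A HA h); specialize (H2 A HA h).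
    rewrite (factors_is_join h x y z (HT A HA) J), (factors_is_join h x' y' z' (HT A HA) J').
    tauto.
  - intros eps x y x' y' Ex Ey H A HA h.
    rewrite (factors_ehat h eps x x' (HT A HA) Ex), (factors_ehat h eps y y' (HT A HA) Ey).
    apply H; auto.
Qed.

Lemma rel_theory_Mod (n : nat) (T : qi S -> Prop) (A : structure S) :
  rel_theory Ax n T -> Mod T A -> Mod Ax A.
Proof. intros (_ & H & _) HA q Hq. apply HA, H. intros B HB; apply HB; auto. Qed.

End Correspondence.

Section FreeStructure.
Context {S : signature} {Ax : qi S -> Prop} {n : nat} {F : structure S} {gen : fin n -> F}
  (HF : is_free Ax n F gen).

(* Freeness lifts a homomorphism [F -> F / p] along the projection to an endomorphism. *)
Lemma ker_hom_quotient (p : cpair F) (Hc : is_congruence p) (h : hom F (quotient p)) :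
  exists eps : hom F F, forall al, fatom_in (ker h) al <-> fatom_in p (fatom_map eps al).
Proof.
  destruct HF as (HF1 & HF2 & HF3).
  destruct (HF3 F HF1 (fun i => qrep (h (gen i)))) as [eps Heps].
  assert (Hr : forall a, fst p (qrep (h a)) (eps a)).
  { intro a. destruct (HF2 a) as [t <-]. rewrite !eval_hom.
    eapply (cong_trans Hc); [apply (eval_quotient Hc)|]. simpl.
    replace (fun k => eps (gen k)) with (fun k => qrep (h (gen k)))
      by (apply functional_extensionality; auto).
    apply (cong_refl Hc). }
  exists eps. intros [a b|r s]; simpl; split; intro K.
  - eapply (cong_trans Hc); [apply (cong_sym Hc), Hr|]. rewrite K. apply Hr.
  - apply (qcarrier_eq Hc). eapply (cong_trans Hc); [apply Hr|].
    eapply (cong_trans Hc); [exact K|apply (cong_sym Hc), Hr].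
  - eapply (cong_rel_compat Hc); [|exact K]. intro i; apply Hr.
  - eapply (cong_rel_compat Hc); [|exact K]. intro i; apply (cong_sym Hc), Hr.
Qed.

Section ModelQuotient.
Context {th : Tn Ax F -> Tn Ax F -> Prop} (Hth : ConS Ax F th).

Lemma model_of_con_quotient (x : Tn Ax F) : model_of_con th (quotient (lower_con th x)).
Proof.
  set (p := lower_con th x).
  pose proof (kcong_lower_con Hth x) as Hk. fold p in Hk.
  pose proof (kcong_congruence Ax p Hk) as Hc.
  split; [apply Hk|]. intros h u w Huw.
  destruct (ker_hom_quotient p Hc h) as [eps Heps].
  assert (Key : forall v : Tn Ax F, exists v', ehat_rel eps v v' /\
             (factors h (proj1_sig v) <-> le_mod th v' x)).
  { intro v. destruct (proj2_sig v) as [lv Hv].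
    exists (exist _ _ (conj_list_compact Ax (map (fatom_map eps) lv)) : Tn Ax F).
    split; [exists lv; split; [exact Hv|apply ceq_refl]|].
    rewrite (factors_conj_list Ax h _ lv (proj2 Hk) Hv). split.
    - intro K. apply (le_mod_of_cle_lower_con Hth). simpl.
      apply conj_list_le; [exact Hk|].
      intros al Hal. apply in_map_iff in Hal as (b & <- & Hb). apply Heps; auto.
    - intros K al Hal. apply Heps. eapply fatom_in_cle; [apply (lower_con_ub x _ K)|].
      apply conj_list_in, in_map, Hal. }
  destruct (Key u) as (u' & Eu & Su), (Key w) as (w' & Ew & Sw).
  pose proof Hth as (_ & _ & _ & _ & Hehat).
  assert (Huw' : th u' w') by (apply (Hehat eps u w); auto).
  rewrite Su, Sw. split; apply (le_mod_conS Hth); auto. apply (conS_sym Hth), Huw'.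
Qed.

(* Test [y] in the quotient of [F] by the elements below [x]. *)
Lemma le_mod_of_con_of_theory_of_con x y :
  con_of_theory (theory_of_con th) x y -> le_mod th y x.
Proof.
  intro Hxy.
  pose proof (congruence_lower_con Hth x) as Hc.
  specialize (Hxy _ (fun q Hq => Hq _ (model_of_con_quotient x)) (quotient_map Hc)).
  rewrite !(factors_quotient_map Hc) in Hxy.
  apply (le_mod_of_cle_lower_con Hth x), Hxy, lower_con_ub, (le_mod_refl Hth).
Qed.

End ModelQuotient.
End FreeStructure.

Definition atoms_elem {S : signature} (Ax : qi S -> Prop) {F : structure S} {V : Type}
  (sg : V -> F) (L : list (atom S V)) : Tn Ax F :=
  exist _ _ (conj_list_compact Ax (map (eval_atom F sg) L)).

Section Theories.
Context {S : signature} {Ax : qi S -> Prop} {F : structure S}.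

Lemma factors_atoms_elem {A : structure S} (h : hom F A) {V : Type} (sg : V -> F) L :
  Mod Ax A ->
  (factors h (proj1_sig (atoms_elem Ax sg L)) <->
   forall a, In a L -> holds A (fun k => h (sg k)) a).
Proof.
  intro HA. unfold atoms_elem; simpl.
  rewrite (factors_conj_list Ax h _ _ HA (ceq_refl _)).
  split; intros H a Ha.
  - apply ker_eval_atom, H, in_map, Ha.
  - apply in_map_iff in Ha as (b & <- & Hb). apply ker_eval_atom; auto.
Qed.

Lemma con_of_theory_qi (n : nat) (T : qi S -> Prop) (sg : nat -> F) q :
  rel_theory Ax n T -> T q ->
  con_of_theory T (atoms_elem Ax sg (prems q)) (atoms_elem Ax sg (concl q :: prems q)).
Proof.
  intros HT Hq A HA h. pose proof (rel_theory_Mod n T A HT HA) as HAx.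
  rewrite !(factors_atoms_elem h sg _ HAx). split; intros H a Ha.
  - destruct Ha as [<-|Ha]; auto. apply (HA q Hq), H.
  - apply H; right; auto.
Qed.

End Theories.

Definition fin_of_nat (n : nat) (Hn : 1 <= n) (m : nat) : fin n :=
  match Compare_dec.lt_dec m n with
  | left p => exist _ m p
  | right _ => exist _ 0 Hn
  end.

Lemma fin_of_nat_proj n Hn (i : fin n) : fin_of_nat n Hn (proj1_sig i) = i.
Proof.
  destruct i as [m p]. unfold fin_of_nat; simpl.
  destruct Compare_dec.lt_dec as [p'|]; [|contradiction].
  f_equal; apply proof_irrelevance.
Qed.

Lemma fin_index_list n (Hn : 1 <= n) (l : list nat) :
  length l <= n ->
  exists sg : nat -> fin n, forall k, In k l -> nth (proj1_sig (sg k)) l 0 = k.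
Proof.
  intro Hl.
  assert (H : forall k, exists i : fin n, In k l -> nth (proj1_sig i) l 0 = k).
  { intro k. destruct (in_dec Nat.eq_dec k l) as [Hk|Hk].
    - destruct (In_nth l k 0 Hk) as (i & Hi & E).
      exists (exist _ i (Nat.lt_le_trans _ _ _ Hi Hl)); auto.
    - exists (fin_of_nat n Hn 0); contradiction. }
  exists (fun k => proj1_sig (constructive_indefinite_description _ (H k))).
  intro k. apply (proj2_sig (constructive_indefinite_description _ (H k))).
Qed.

Section Encoding.
Context {S : signature} {Ax : qi S -> Prop} {n : nat} (Hn : 1 <= n)
  {F : structure S} {gen : fin n -> F} (HF : is_free Ax n F gen).

(* A chosen term over the generators, with its variables read as [0, ..., n-1]. *)
Definition nat_term (a : F) : term S nat :=
  tmap (@proj1_sig _ _) (proj1_sig (constructive_indefinite_description _ (proj1 (proj2 HF) a))).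

Lemma eval_nat_term {A : structure S} (h : hom F A) (v : nat -> A) (a : F) :
  (forall i : fin n, v (proj1_sig i) = h (gen i)) -> eval A v (nat_term a) = h a.
Proof.
  intro Hv. unfold nat_term. destruct constructive_indefinite_description as [t Ht]; simpl.
  rewrite eval_tmap, <- Ht, eval_hom. f_equal.
  apply functional_extensionality; auto.
Qed.

Definition encode_atom (al : fatom F) : atom S nat :=
  match al with
  | FEq a b => AEq (nat_term a) (nat_term b)
  | FRel r s => ARel r (fun j => nat_term (s j))
  end.

Lemma holds_encode_atom {A : structure S} (h : hom F A) (v : nat -> A) al :
  (forall i : fin n, v (proj1_sig i) = h (gen i)) ->
  (holds A v (encode_atom al) <-> fatom_in (ker h) al).
Proof.
  intro Hv. destruct al as [a b|r s]; simpl.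
  - rewrite !(eval_nat_term h v _ Hv); tauto.
  - replace (fun j => eval A v (nat_term (s j))) with (fun j => h (s j)); [tauto|].
    apply functional_extensionality; intro; rewrite (eval_nat_term h v _ Hv); auto.
Qed.

Definition encode_qi (lx : list (fatom F)) (beta : fatom F) : qi S :=
  QI (map encode_atom lx) (encode_atom beta).

Lemma nvars_encode_qi lx beta : nvars_le n (encode_qi lx beta).
Proof.
  exists (seq 0 n). split; [rewrite length_seq; lia|].
  assert (Ha : forall al k, occurs_atom k (encode_atom al) -> In k (seq 0 n)).
  { intros [a b|r s] k Hk; apply in_seq; simpl in Hk.
    - destruct Hk as [Hk|Hk]; apply occurs_tmap_fin in Hk; lia.
    - destruct Hk as [j Hk]; apply occurs_tmap_fin in Hk; lia. }
  intros k [(a & Ha1 & Ha2)|Hk]; simpl in *.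
  - apply in_map_iff in Ha1 as (al & <- & _). eauto.
  - eauto.
Qed.

Lemma hom_valuation {A : structure S} (h : hom F A) :
  exists v : nat -> A, forall i : fin n, v (proj1_sig i) = h (gen i).
Proof.
  exists (fun k => h (gen (fin_of_nat n Hn k))). intro i. rewrite fin_of_nat_proj; auto.
Qed.

Section ConTheory.
Context {th : Tn Ax F -> Tn Ax F -> Prop} (Hth : ConS Ax F th).

(* [x th y] turns into the quasi-identities [&lx => beta], one for each atom [beta] of [y]. *)
Lemma theory_of_con_encode_qi (x y : Tn Ax F) lx ly beta :
  th x y -> ceq (proj1_sig x) (conj_list Ax lx) -> ceq (proj1_sig y) (conj_list Ax ly) ->
  In beta ly -> theory_of_con th (encode_qi lx beta).
Proof.
  intros Hxy Hx Hy Hb A [HA HK] v Hp.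
  destruct HF as (_ & _ & HF3).
  destruct (HF3 A HA (fun i => v (proj1_sig i))) as [h Hh].
  assert (Hv : forall i : fin n, v (proj1_sig i) = h (gen i)) by (intro; rewrite Hh; auto).
  apply (holds_encode_atom h v _ Hv).
  assert (Sx : factors h (proj1_sig x)).
  { apply (factors_conj_list Ax h _ lx HA Hx). intros al Hal.
    apply (holds_encode_atom h v _ Hv), Hp, in_map, Hal. }
  apply (HK h x y Hxy) in Sx. exact (proj1 (factors_conj_list Ax h _ ly HA Hy) Sx beta Hb).
Qed.

Lemma model_of_con_Mod (A : structure S) :
  Mod (fun q => Ax q \/ (theory_of_con th q /\ nvars_le n q)) A -> model_of_con th A.
Proof.
  intro HA. assert (HAx : Mod Ax A) by (intros q Hq; apply HA; auto).
  assert (D : forall (h : hom F A) x y, th x y -> factors h (proj1_sig x) -> factors h (proj1_sig y)).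
  { intros h x y Hxy Sx.
    destruct (proj2_sig x) as [lx Hx], (proj2_sig y) as [ly Hy].
    destruct (hom_valuation h) as [v Hv].
    apply (factors_conj_list Ax h _ ly HAx Hy). intros beta Hb.
    apply (holds_encode_atom h v _ Hv).
    apply (HA (encode_qi lx beta)).
    - right. split; [eapply theory_of_con_encode_qi; eauto|apply nvars_encode_qi].
    - intros a Ha. simpl in Ha. apply in_map_iff in Ha as (al & <- & Hal).
      apply (holds_encode_atom h v _ Hv).
      exact (proj1 (factors_conj_list Ax h _ lx HAx Hx) Sx al Hal). }
  split; auto. intros h x y Hxy. split; apply D; auto. apply (conS_sym Hth), Hxy.
Qed.

Lemma Mod_theory_of_con (A : structure S) : Mod (theory_of_con th) A -> model_of_con th A.
Proof.
  intro HA. apply model_of_con_Mod. intros q [Hq|[Hq _]]; apply HA; auto.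
  intros B [HB _]. apply HB, Hq.
Qed.

Lemma rel_theory_theory_of_con : rel_theory Ax n (theory_of_con th).
Proof.
  split; [|split].
  - exists (theory_of_con th). intro q. split.
    + intros Hq A HA. apply HA, Hq.
    + intros Hq A HA. apply Hq. intros q' Hq'. apply Hq'; auto.
  - intros q Hq A [HA _]. apply Hq, HA.
  - intro q. split.
    + intros Hq A HA. apply Hq, model_of_con_Mod, HA.
    + intros Hq A HA. apply Hq. intros q' [Hq'|[Hq' _]]; [apply HA; auto|apply Hq'; auto].
Qed.

Lemma con_of_theory_of_con x y : th x y <-> con_of_theory (theory_of_con th) x y.
Proof.
  split.
  - intros Hxy A HA h. apply (Mod_theory_of_con A HA), Hxy.
  - intro Hxy. apply (le_mod_antisym Hth); apply (le_mod_of_con_of_theory_of_con HF Hth); auto.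
    intros A HA h. symmetry. apply Hxy, HA.
Qed.

End ConTheory.

(* Send the at most [n] variables of [q] injectively to the free generators. *)
Lemma rel_theory_qi_of_con (T : qi S -> Prop) q (l : list nat) :
  rel_theory Ax n T -> length l <= n -> (forall x, occurs_qi x q -> In x l) ->
  (forall sg : nat -> F,
     con_of_theory T (atoms_elem Ax sg (prems q)) (atoms_elem Ax sg (concl q :: prems q))) ->
  T q.
Proof.
  intros HT Hl Hocc Hf. destruct HT as (_ & _ & HT3).
  destruct (fin_index_list n Hn l Hl) as [sg Hsg].
  apply HT3. intros A HA.
  assert (HAT : Mod T A) by (intros q' Hq'; apply HT3 in Hq'; apply Hq', HA).
  assert (HAx : Mod Ax A) by (intros q' Hq'; apply HA; auto).
  intros v Hp.
  destruct HF as (_ & _ & HF3).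
  destruct (HF3 A HAx (fun i => v (nth (proj1_sig i) l 0))) as [h Hh].
  assert (Hat : forall a, (forall k, occurs_atom k a -> In k l) ->
                  holds A (fun k => h (gen (sg k))) a <-> holds A v a).
  { intros a Ha. apply holds_occurs. intros k Hk. rewrite Hh, Hsg; auto. }
  specialize (Hf (fun k => gen (sg k)) A HAT h).
  rewrite !(factors_atoms_elem h _ _ HAx) in Hf.
  apply Hat; [intros k Hk; apply Hocc; right; auto|].
  apply (proj1 Hf); [|left; reflexivity].
  intros a Ha. apply Hat; [intros k Hk; apply Hocc; left; eauto|]. apply Hp, Ha.
Qed.

Lemma con_of_theory_mono (T T' : qi S -> Prop) :
  rel_theory Ax n T -> rel_theory Ax n T' ->
  ((forall q, T q -> T' q) <->
   (forall x y : Tn Ax F, con_of_theory T x y -> con_of_theory T' x y)).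
Proof.
  intros HT HT'. split.
  - intros H x y Hf A HA. apply Hf. intros q Hq; apply HA, H, Hq.
  - intros H q Hq. pose proof HT as (_ & _ & HT3). pose proof HT' as (_ & _ & HT3').
    apply HT3 in Hq. apply HT3'. intros A HA. apply Hq.
    intros q' [Hq'|[Hq' (l & Hl & Ho)]]; apply HA; [left; auto|right].
    split; [|exists l; auto].
    apply (rel_theory_qi_of_con T' q' l HT' Hl Ho).
    intro sg. apply H, (con_of_theory_qi n T); auto.
Qed.

End Encoding.

Theorem theorem3p3 (S : signature) (Ax : qi S -> Prop) (n : nat) (Hn : 1 <= n)
  (F : structure S) (gen : fin n -> F) (HF : is_free Ax n F gen) :
  exists f : {T : qi S -> Prop | rel_theory Ax n T} -> (Tn Ax F -> Tn Ax F -> Prop),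
    (forall T, ConS Ax F (f T)) /\
    (forall T T', (forall q, proj1_sig T q -> proj1_sig T' q) <->
                  (forall x y, f T x y -> f T' x y)) /\
    (forall th, ConS Ax F th -> exists T, forall x y, th x y <-> f T x y).
Proof.
  exists (fun T => con_of_theory (proj1_sig T)). split; [|split].
  - intros [T HT]. apply conS_con_of_theory. intro A. apply (rel_theory_Mod n), HT.
  - intros [T HT] [T' HT']. apply (con_of_theory_mono Hn HF); auto.
  - intros th Hth.
    exists (exist _ _ (rel_theory_theory_of_con Hn HF Hth)).
    apply (con_of_theory_of_con Hn HF Hth).
Qed.
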